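(* Let $k\ge 2$, let $U$ be any rotation of a binary de Bruijn cycle of order $k$, and let $w_{\mathrm{lin}}=U\,U[0..k-2]$ (a word of length $2^k+k-1$). Then the size of a smallest suffixient set for $w_{\mathrm{lin}}\$$ is $2^k+1$.
   Context: A binary de Bruijn cycle of order $k$ is a cyclic word $C$ of length $2^k$ over $\{0,1\}$ such that every word of $\{0,1\}^k$ occurs exactly once as a cyclic length-$k$ window of $C$. Strings are $0$-indexed; $w[i..j]$ is the substring from $i$ to $j$ inclusive. $\$$ is an end-marker not in $\{0,1\}$, occurring once at the end. For a string $v$ (over $\{0,1,\$\}$), a substring $x$ (possibly empty) is right-maximal if $xa$ and $xb$ are substrings of $v$ for two distinct symbols $a\ne b$; these words $xa$ are the right-extensions of $v$. A set $S$ of positions of $v$ is suffixient for $v$ if every right-extension of $v$ is a suffix of $v[0..j]$ for some $j\in S$. *)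

From mathcomp Require Import all_boot.
Set Implicit Arguments. Unset Strict Implicit. Unset Printing Implicit Defensive.

(* Binary words are seq bool.  Strings over {0,1,$} are seq (option bool),
   with [Some b] the binary symbol b and [None] the end-marker $. *)

Definition cyc_window (C : seq bool) (k i : nat) : seq bool :=
  take k (drop i (C ++ C)).

Definition debruijn (k : nat) (C : seq bool) : Prop :=
  size C = 2 ^ k /\
  forall w : seq bool, size w = k ->
    count (fun i => cyc_window C k i == w) (iota 0 (2 ^ k)) = 1.

Section Suff.
Variable A : eqType.

Definition substr (x v : seq A) : Prop := infix x v.

Definition right_maximal (v x : seq A) : Prop :=
  exists a b : A, a != b /\ substr (rcons x a) v /\ substr (rcons x b) v.

Definition right_extension (v y : seq A) : Prop :=
  exists (x : seq A) (a : A), y = rcons x a /\ right_maximal v x /\ substr y v.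

Definition suffixient (v : seq A) (S : {set 'I_(size v)}) : Prop :=
  forall y, right_extension v y ->
    exists2 j : 'I_(size v), j \in S & suffix y (take j.+1 v).
End Suff.

Definition w_lin (k : nat) (U : seq bool) : seq bool := U ++ take (k - 1) U.

Definition with_end (w : seq bool) : seq (option bool) := rcons (map Some w) None.

From mathcomp Require Import all_boot zify.
Set Implicit Arguments. Unset Strict Implicit. Unset Printing Implicit Defensive.

(* Let w be U followed by its first k-1 letters, so that every binary word of
   length k is a factor of w.  A right extension of w$ is either a suffix of
   w$ or a binary factor of w; padding the latter on the left to length k shows
   that it ends at one of the 2^k + 1 positions j >= k-1.  Conversely the 2^k
   binary words of length k and the word $ are all right extensions, and no
   two of them can end at the same position since none is a suffix of another,
   so every suffixient set has at least 2^k + 1 elements. *)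

Lemma card_ord_geq m a : #|[set j : 'I_m | a <= j]| = m - a.
Proof.
rewrite cardsE -sum1_card -[m - a]muln1 -sum_nat_const_nat big_geq_mkord.
by apply: eq_bigl.
Qed.

Lemma leq_card_witness (T I : finType) (S : {set I}) (R : T -> I -> bool) :
  (forall x, exists2 j, j \in S & R x j) ->
  (forall x y j, R x j -> R y j -> x = y) -> #|T| <= #|S|.
Proof.
move=> witness functional.
have exR x : exists j, (j \in S) && R x j.
  by have [j jS Rxj] := witness x; exists j; rewrite jS.
pose f x := xchoose (exR x).
have fSR x : (f x \in S) && R x (f x) := xchooseP (exR x).
have f_inj : injective f.
  move=> x y fxy; apply: (functional x y (f x)); first by case/andP: (fSR x).
  by rewrite fxy; case/andP: (fSR y).
rewrite -cardsT -(card_imset [set: T] f_inj).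
by apply/subset_leq_card/subsetP => _ /imsetP[x _ ->]; case/andP: (fSR x).
Qed.

Section Words.
Variable T : eqType.
Implicit Types s x z U : seq T.

Lemma suffix_size_leq x z s :
  suffix x s -> suffix z s -> size x <= size z -> suffix x z.
Proof.
rewrite !suffixE => /eqP <- /eqP <-; rewrite !size_drop drop_drop => le_xz.
by rewrite (_ : _ + _ = size s - size x) //; lia.
Qed.

Lemma suffix_map (T' : eqType) (f : T -> T') x z :
  suffix x z -> suffix (map f x) (map f z).
Proof. by case/suffixP => p ->; rewrite map_cat suffix_suffix. Qed.

Lemma infix_map (T' : eqType) (f : T -> T') x s :
  infix x s -> infix (map f x) (map f s).
Proof. by case/infixP => p [q ->]; rewrite !map_cat infix_infix. Qed.

Lemma infix_mapP (T' : eqType) (f : T -> T') (y : seq T') s :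
  infix y (map f s) -> exists2 x, infix x s & y = map f x.
Proof.
case/infixP => p [q e]; exists (take (size y) (drop (size p) s)).
  exact: infix_trans (infix_take _ _) (infix_drop _ _).
by rewrite map_take map_drop e drop_size_cat // take_size_cat.
Qed.

Lemma infix_end_position z s : infix z s -> 0 < size z ->
  exists2 j : 'I_(size s), size z <= j.+1 & suffix z (take j.+1 s).
Proof.
case/infixP => p [q ->] z_gt0.
have j_lt : (size p + size z).-1 < size (p ++ z ++ q) by rewrite !size_cat; lia.
exists (Ordinal j_lt); rewrite /= prednK ?addn_gt0 ?z_gt0 ?orbT //; first exact: leq_addl.
by rewrite catA -size_cat take_size_cat // suffix_suffix.
Qed.

Lemma take_rot_infix U k j : k <= size U -> infix (take k (rot j U)) (U ++ take (k - 1) U).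
Proof.
move=> kU; case: (ltnP j (size U)) => [jU | /rot_oversize ->]; last first.
  exact: infix_catr (infix_take _ _).
rewrite (_ : take k (rot j U) = take k (drop j (U ++ take (k - 1) U))).
  exact: infix_trans (infix_take _ _) (infix_drop _ _).
rewrite /rot drop_cat jU !take_cat size_drop; case: ifP => // short_tail.
by rewrite !take_takel //; lia.
Qed.

End Words.

Lemma cyc_window_rot C k i : k <= size C -> i < size C ->
  cyc_window C k i = take k (rot i C).
Proof.
move=> kC iC; rewrite /cyc_window /rot drop_cat iC !take_cat size_drop.
by case: ifP => // short_tail; rewrite take_takel //; lia.
Qed.

Lemma size_with_end w : size (with_end w) = (size w).+1.
Proof. by rewrite size_rcons size_map. Qed.

Lemma leq_exp2 k : k <= 2 ^ k.
Proof. exact/ltnW/ltn_expl. Qed.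

Lemma debruijn_window k C z : debruijn k C -> size z = k ->
  exists i, z = take k (rot i C).
Proof.
case=> sizeC once sz.
have /hasP[i] : has (fun i => cyc_window C k i == z) (iota 0 (2 ^ k)).
  by rewrite has_count once.
rewrite mem_iota add0n => /andP[_ iC] /eqP <-.
by exists i; rewrite cyc_window_rot // sizeC ?leq_exp2.
Qed.

Lemma infix_w_lin k C r z : debruijn k C -> size z = k -> infix z (w_lin k (rot r C)).
Proof.
move=> dB sz; have [i ->] := debruijn_window dB sz.
(* C = rotr r (rot r C) is itself a rotation of rot r C. *)
rewrite -[in take _ _](rotK r C) /rotr rot_rot_add.
by apply: take_rot_infix; case: dB => sizeC _; rewrite size_rot sizeC leq_exp2.
Qed.

Lemma size_w_lin k C r : debruijn k C -> size (w_lin k (rot r C)) = 2 ^ k + (k - 1).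
Proof.
case=> sizeC _; rewrite size_cat size_takel size_rot sizeC //.
exact: leq_trans (leq_subr _ _) (leq_exp2 k).
Qed.

Section EndMarked.
Variables (k : nat) (w : seq bool).
Hypothesis k_gt0 : 0 < k.
Hypothesis w_factors : forall z, size z = k -> infix z w.
Local Notation v := (with_end w).

Lemma infix_with_end x : infix x w -> infix (map Some x) v.
Proof. by move=> xw; rewrite /with_end -cats1 infix_catr // infix_map. Qed.

Lemma suffix_of_long_factor x : infix x w ->
  exists2 z, infix z w & (k <= size z) && suffix x z.
Proof.
move=> xw; case: (leqP k (size x)) => [kx | /ltnW xk]; first by exists x => //; rewrite kx suffix_refl.
have padded_size : size (nseq (k - size x) false ++ x) = k by rewrite size_cat size_nseq subnK.
exists (nseq (k - size x) false ++ x); first exact: w_factors.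
by rewrite padded_size leqnn suffix_suffix.
Qed.

Lemma factor_ends_late x : infix x w ->
  exists2 j : 'I_(size v), k.-1 <= j & suffix (map Some x) (take j.+1 v).
Proof.
case/suffix_of_long_factor=> z /infix_with_end zv /andP[kz xz].
have [|j zj suff_z] := infix_end_position zv; first by rewrite size_map; lia.
exists j; last exact: suffix_trans (suffix_map _ xz) suff_z.
by rewrite size_map in zj; rewrite -ltnS prednK // (leq_trans kz zj).
Qed.

Lemma suffixient_tail : suffixient [set j : 'I_(size v) | k.-1 <= j].
Proof.
move=> _ [x [a [-> [_]]]].
rewrite /substr {1}/with_end infix_rconsl => /orP[suff_v | /infix_mapP[x' x'w ->]].
  have last_lt : size w < size v by rewrite size_with_end.
  exists (Ordinal last_lt); last by rewrite -size_with_end take_size.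
  have /size_infix : infix (nseq k false) w by apply: w_factors; rewrite size_nseq.
  by rewrite inE size_nseq /=; lia.
by have [j kj suff_j] := factor_ends_late x'w; exists j => //; rewrite inE.
Qed.

Lemma right_extension_word t : size t = k -> right_extension v (map Some t).
Proof.
case/lastP: t => [|t c] st; first by move: k_gt0; rewrite -st.
have ext b : substr (map Some (rcons t b)) v.
  by apply/infix_with_end/w_factors; rewrite size_rcons -st size_rcons.
exists (map Some t), (Some c); rewrite map_rcons; split => //; split; last by rewrite -map_rcons.
by exists (Some false), (Some true); rewrite -!map_rcons.
Qed.

Lemma right_extension_end : right_extension v [:: None].
Proof.
have end_v : substr [:: None] v by rewrite /substr infix1s mem_rcons mem_head.
have false_w : infix [:: false] w.
  have /mem_infix : infix (nseq k false) w by apply: w_factors; rewrite size_nseq.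
  by rewrite infix1s; apply; rewrite mem_nseq k_gt0.
exists [::], None; split => //; split => //.
by exists (Some false), None; split => //; split => //; apply: infix_with_end false_w.
Qed.

Definition forced_extension (o : option (k.-tuple bool)) : seq (option bool) :=
  if o is Some t then map Some t else [:: None].

Lemma forced_extension_suffix_inj o o' s :
  suffix (forced_extension o) s -> suffix (forced_extension o') s -> o = o'.
Proof.
have no_end (t : k.-tuple bool) : suffix (map Some t) s -> suffix [:: None] s -> False.
  move=> ts ends; have := suffix_size_leq ends ts.
  by rewrite size_map size_tuple => /(_ k_gt0) /suffix1s /mapP[].
case: o o' => [t|] [t'|] //= ts t's; [|by case: (no_end t ts t's)|by case: (no_end t' t's ts)].
have := suffix_size_leq ts t's; rewrite !size_map !size_tuple => /(_ (leqnn k)).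
by rewrite suffixE !size_map !size_tuple subnn drop0 => /eqP/(inj_map Some_inj)/val_inj ->.
Qed.

Lemma suffixient_card_ge (S : {set 'I_(size v)}) : suffixient S -> 2 ^ k + 1 <= #|S|.
Proof.
move=> suffS.
have -> : 2 ^ k + 1 = #|{: option (k.-tuple bool)}|.
  by rewrite card_option card_tuple card_bool addn1.
apply: (@leq_card_witness _ _ S (fun o j => suffix (forced_extension o) (take j.+1 v))).
  case=> [t|]; apply: suffS; last exact: right_extension_end.
  by apply: right_extension_word; rewrite size_tuple.
by move=> o o' j; apply: forced_extension_suffix_inj.
Qed.

End EndMarked.

Theorem lemma4 (k : nat) (C : seq bool) (r : nat) :
  2 <= k -> debruijn k C ->
  let v := with_end (w_lin k (rot r C)) in
  (exists S : {set 'I_(size v)}, suffixient S /\ #|S| = 2 ^ k + 1) /\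
  (forall S : {set 'I_(size v)}, suffixient S -> 2 ^ k + 1 <= #|S|).
Proof.
move=> k2 dB v; have k_gt0 : 0 < k by lia.
have factors := infix_w_lin r dB.
split; last exact: suffixient_card_ge.
exists [set j : 'I_(size v) | k.-1 <= j]; split; first exact: suffixient_tail.
by rewrite card_ord_geq size_with_end (size_w_lin r dB); lia.
Qed.
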